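(* Let $\Pi,\Sigma$ be finite signatures and let $\gamma$ be a gadget (with finite component structures) mapping $\Pi$-structures to $\Sigma$-structures. Then there is a Datalog$^\cup$ reduction $\psi$ such that, for every $\Pi$-structure $\mathbf A$, the structures $\gamma(\mathbf A)$ and $\psi(\mathbf A)$ are homomorphically equivalent.
   Context: Structures. A (multisorted relational) signature consists of types and relation symbols, each symbol $R$ having an arity $\mathrm{ar}_R$, a tuple of types. A structure $\mathbf A$ consists of a set $A_t$ per type and relations $R^{\mathbf A}\subseteq A_{\mathrm{ar}_R(1)}\times\dots\times A_{\mathrm{ar}_R(k)}$. A homomorphism is a type-preserving family of maps preserving all relations. Two structures are homomorphically equivalent if there are homomorphisms in both directions. Gadgets. A gadget $\gamma$ mapping $\Pi$-structures to $\Sigma$-structures consists of a $\Sigma$-structure $\mathbf D_t^\gamma$ for each $\Pi$-type $t$, a $\Sigma$-structure $\mathbf R^\gamma$ for each $\Pi$-symbol $R$, and a homomorphism $p_{R,i}^\gamma\colon\mathbf D^\gamma_{\mathrm{ar}_R(i)}\to\mathbf R^\gamma$ for each $\Pi$-symbol $R$ of arity $k$ and each $i\in[k]$. The gadget replacement $\gamma(\mathbf A)$ of a $\Pi$-structure $\mathbf A$ is obtained as follows: take the disjoint union of a copy of $\mathbf D^\gamma_t$ for each $a\in A_t$ (elements denoted $(a;d)$), and a copy of $\mathbf R^\gamma$ for each symbol $R$ and each tuple $a\in R^{\mathbf A}$ (elements denoted $(a;e)$); then, for every such $a=(a_1,\dots,a_k)\in R^{\mathbf A}$, $i\in[k]$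 and $e\in\mathbf D^\gamma_{\mathrm{ar}_R(i)}$, identify $(a;p^\gamma_{R,i}(e))$ with $(a_i;e)$; $\gamma(\mathbf A)$ is the quotient by the equivalence relation generated by these identifications, with relations the images of the relations of the copies. Datalog programs and interpretations. A Datalog program with input signature $\Pi$ consists of a signature $\Delta\supseteq\Pi$ with the same types, a finite set of rules $t_0\leftarrow t_1,\dots,t_r$ with $t_i$ atomic $\Delta$-formulas (typed relational atoms or equalities of same-typed variables; heads use neither $\Pi$-symbols nor equality), and a designated output symbol, evaluated by least-fixed-point semantics. A Datalog interpretation $\phi$ from $\Pi$-structures to $\Sigma$-structures consists of a Datalog program $\phi_t$ for each $\Sigma$-type $t$ and $\phi_R$ for each $\Sigma$-symbol $R$ (arity of $\phi_R$ = concatenation of arities of $\phi_{\mathrm{ar}_R(i)}$); $\phi(\mathbf A)$ has $t$-th domain $\phi_t(\mathbf A)$ and $(w_1,\dots,w_k)\in R^{\phi(\mathbf A)}$ iff the concatenation of the $w_i$ is in $\phi_R(\mathbf A)$. Union gadgets and Datalog$^\cup$ reductions. A union gadget $\upsilon=(d,r)$ from $\Pi$ to $\Sigma$ consists of maps $d$ ($\Pi$-types to $\Sigma$-types) and $r$ ($\Pi$-symbols to $\Sigma$-symbols) with $\mathrm{ar}_{r(R)}=d\circ\mathrm{ar}_R$; $\upsilon(\mathbf A)$ has $t$-th domain the disjoint union of the $A_s$ with $d(s)=t$, and $S^{\upsilon(\mathbf A)}=\bigcup_{r(R)=S}R^{\mathbf A}$. A Datalog$^\cup$ reduction is a composition $\upsilon\circ\phi$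 of a Datalog interpretation followed by a union gadget. *)

From mathcomp Require Import all_boot.
From Stdlib Require Import Relations.
From Stdlib Require List.
Set Implicit Arguments. Unset Strict Implicit. Unset Printing Implicit Defensive.

Record signature := Signature {
  sty : finType;
  ssym : finType;
  sar : ssym -> seq sty }.

Definition ar_at (S : signature) (R : ssym S) (i : 'I_(size (sar R))) : sty S :=
  tnth (in_tuple (sar R)) i.
Arguments ar_at {S} R i.

(* A structure: one carrier with a typing function (the carrier of type t is
   {x | tyof x = t}, so the carrier is the disjoint union of the A_t), and
   relations given as predicates on lists of elements. *)
Record structure (S : signature) := MkStr {
  carrier :> Type;
  tyof : carrier -> sty S;
  rel : ssym S -> seq carrier -> Prop }.
Arguments tyof {S} A _ : rename.
Arguments rel {S} A _ _ : rename.
Arguments carrier {S} A : rename.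

Definition wt_structure S (A : structure S) : Prop :=
  forall R l, rel A R l -> map (tyof A) l = sar R.

Definition finite_structure S (A : structure S) : Prop :=
  exists l : list A, forall x : A, List.In x l.

Definition is_hom S (A B : structure S) (f : A -> B) : Prop :=
  (forall x, tyof B (f x) = tyof A x) /\
  (forall R l, rel A R l -> rel B R (map f l)).

Definition hom_equiv S (A B : structure S) : Prop :=
  (exists f : A -> B, is_hom f) /\ (exists g : B -> A, is_hom g).

Record gadget (P S : signature) := Gadget {
  gD : sty P -> structure S;
  gR : ssym P -> structure S;
  gp : forall (R : ssym P) (i : 'I_(size (sar R))), gD (ar_at R i) -> gR R }.

Definition wf_gadget P S (g : gadget P S) : Prop :=
  (forall t, wt_structure (gD g t) /\ finite_structure (gD g t)) /\
  (forall R, wt_structure (gR g R) /\ finite_structure (gR g R)) /\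
  (forall R i, is_hom (@gp P S g R i)).

Section GadgetReplacement.
Variables (P S : signature) (g : gadget P S) (A : structure P).

(* elements (a;d) of the copy of D_t for a in A_t, and (a;e) of the copy of
   R^gamma for a in R^A *)
Inductive gpre : Type :=
| PD (t : sty P) (a : A) (d : gD g t)
| PR (R : ssym P) (a : seq A) (e : gR g R).

Definition gvalid (p : gpre) : Prop :=
  match p with
  | PD t a _ => tyof A a = t
  | PR R a _ => rel A R a
  end.

Definition pty (p : gpre) : sty S :=
  match p with
  | PD t _ d => tyof (gD g t) d
  | PR R _ e => tyof (gR g R) e
  end.

(* identify (a; p_{R,i}(e)) with (a_i; e) *)
Definition gident (p q : gpre) : Prop :=
  exists (R : ssym P) (a : seq A) (i : 'I_(size (sar R)))
         (e : gD g (ar_at R i)) (x0 : A),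
    rel A R a /\ p = @PR R a (@gp P S g R i e) /\ q = @PD (ar_at R i) (nth x0 a i) e.

Definition geqv : gpre -> gpre -> Prop := clos_refl_sym_trans gpre gident.

Definition gcls (p : gpre) : sty S * (gpre -> Prop) := (pty p, geqv p).

(* carrier: equivalence classes (tagged with their type) of valid elements *)
Definition gcarrier : Type :=
  {x : sty S * (gpre -> Prop) | exists p, gvalid p /\ gcls p = x}.

Definition gcopy_rel (Q : ssym S) (ps : seq gpre) : Prop :=
  (exists (t : sty P) (a : A) (ds : seq (gD g t)),
      tyof A a = t /\ rel (gD g t) Q ds /\ ps = map (@PD t a) ds) \/
  (exists (R : ssym P) (a : seq A) (es : seq (gR g R)),
      rel A R a /\ rel (gR g R) Q es /\ ps = map (@PR R a) es).

Definition gadget_apply : structure S :=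
  @MkStr S gcarrier (fun x : gcarrier => (proj1_sig x).1)
    (fun Q cs => exists ps, gcopy_rel Q ps /\ map gcls ps = map (@proj1_sig _ _) cs).

End GadgetReplacement.

Record rule (P : signature) (I : finType) := Rule {
  nv : nat;
  vty : 'I_nv -> sty P;
  hsym : I;
  hargs : seq 'I_nv;
  bedb : seq (ssym P * seq 'I_nv);
  bidb : seq (I * seq 'I_nv);
  beq : seq ('I_nv * 'I_nv) }.

Record program (P : signature) := Program {
  idb : finType;
  idb_ar : idb -> seq (sty P);
  rules : seq (rule P idb);
  pout : idb }.
Arguments idb_ar {P} pr _ : rename.
Arguments rules {P} pr : rename.
Arguments pout {P} pr : rename.

Definition out_ar P (pr : program P) : seq (sty P) := idb_ar pr (pout pr).

Definition wf_rule P (I : finType) (iar : I -> seq (sty P)) (r : rule P I) : Prop :=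
  map (@vty _ _ r) (hargs r) = iar (hsym r) /\
  (forall a, List.In a (bedb r) -> map (@vty _ _ r) a.2 = sar a.1) /\
  (forall a, List.In a (bidb r) -> map (@vty _ _ r) a.2 = iar a.1) /\
  (forall a, List.In a (beq r) -> vty a.1 = vty a.2).

Definition wf_program P (pr : program P) : Prop :=
  forall r, List.In r (rules pr) -> wf_rule (idb_ar pr) r.

Inductive derives P (pr : program P) (A : structure P) : idb pr -> seq A -> Prop :=
| Der (r : rule P (idb pr)) (v : 'I_(nv r) -> A) :
    List.In r (rules pr) ->
    (forall x, tyof A (v x) = vty x) ->
    (forall a, List.In a (bedb r) -> rel A a.1 (map v a.2)) ->
    (forall a, List.In a (bidb r) -> @derives P pr A a.1 (map v a.2)) ->
    (forall a, List.In a (beq r) -> v a.1 = v a.2) ->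
    @derives P pr A (hsym r) (map v (hargs r)).
Arguments derives {P} pr A _ _.

Definition dl_out P (pr : program P) (A : structure P) (w : seq A) : Prop :=
  derives pr A (pout pr) w.
Arguments dl_out {P} pr A w.

Record dl_interp (P S : signature) := DLInterp {
  iT : sty S -> program P;
  iR : ssym S -> program P }.

Definition wf_interp P S (phi : dl_interp P S) : Prop :=
  (forall t, wf_program (iT phi t)) /\
  (forall R, wf_program (iR phi R)) /\
  (forall R, out_ar (iR phi R) = flatten (map (fun t => out_ar (iT phi t)) (sar R))).

Definition interp_apply P S (phi : dl_interp P S) (A : structure P) : structure S :=
  @MkStr S {p : sty S * seq A | dl_out (iT phi p.1) A p.2}
    (fun x => (proj1_sig x).1)
    (fun R ws => map (fun x => (proj1_sig x).1) ws = sar R /\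
                 dl_out (iR phi R) A (flatten (map (fun x => (proj1_sig x).2) ws))).

Record ugadget (S0 S : signature) := UGadget {
  ud : sty S0 -> sty S;
  ur : ssym S0 -> ssym S }.

Definition wf_ugadget S0 S (u : ugadget S0 S) : Prop :=
  forall R, sar (ur u R) = map (ud u) (sar R).

Definition ug_apply S0 S (u : ugadget S0 S) (A : structure S0) : structure S :=
  @MkStr S A (fun x => ud u (tyof A x))
    (fun Q l => exists R, ur u R = Q /\ rel A R l).

Record dlu (P S : signature) := DLU {
  dmid : signature;
  dphi : dl_interp P dmid;
  dups : ugadget dmid S }.

Definition wf_dlu P S (psi : dlu P S) : Prop :=
  wf_interp (dphi psi) /\ wf_ugadget (dups psi).

Definition dlu_apply P S (psi : dlu P S) (A : structure P) : structure S :=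
  ug_apply (dups psi) (interp_apply (dphi psi) A).

From HB Require Import structures.
From mathcomp Require Import all_boot.
From Stdlib Require Import Relations ClassicalEpsilon FunctionalExtensionality PropExtensionality.
Set Implicit Arguments. Unset Strict Implicit. Unset Printing Implicit Defensive.

(* An element (a; x) of the gadget replacement, with x a point of one of the finitely
   many pieces D_t or R^gamma, is encoded by the tuple a (of length 1, resp. |ar R|)
   placed at the new type x.  One Datalog program derives, for every such type, the
   tuples that encode elements (Valid), the pairs of encodings of elements identified
   by the equivalence generated by the gadget (Equiv, closed one identification at a
   time), and the tuples of encodings of elements equivalent to a copy of a relation
   tuple of a piece (Out); the union gadget forgets the points and keeps their
   Sigma-types.  Encoding some representative of each class is then a homomorphism
   because Out is closed under Equiv, and decoding an encoding to its class is a
   homomorphism because every derived Out tuple is equivalent to a copy tuple. *)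

Lemma In_map (T U : Type) (f : T -> U) y s :
  List.In y (map f s) <-> exists x, f x = y /\ List.In x s.
Proof. exact: List.in_map_iff. Qed.

Lemma In_pmap (T U : Type) (f : T -> option U) y s :
  List.In y (pmap f s) <-> exists2 x, List.In x s & f x = Some y.
Proof.
elim: s => [|x s IHs] /=; first by split=> // -[].
case Efx: (f x) => [z|] /=; rewrite IHs; split.
- by case=> [<-|[x' sx' fx']]; [exists x; auto | exists x'; auto].
- by case=> x' [<-|sx'] fx'; [left; congruence | right; exists x'].
- by case=> x' sx' fx'; exists x'; auto.
- by case=> x' [<-|sx'] fx'; [congruence | exists x'].
Qed.

Lemma In_enum (T : finType) (x : T) : List.In x (enum T).
Proof.
have : x \in enum T by rewrite mem_enum.
elim: (enum T) => [|y s IHs] //=; rewrite in_cons => /orP[/eqP->|/IHs]; auto.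
Qed.

Lemma In_tnth (T : Type) (s : seq T) x :
  List.In x s -> exists i : 'I_(size s), tnth (in_tuple s) i = x.
Proof.
elim: s => [|y s IHs] //= [<-|/IHs[i <-]]; first by exists ord0.
by exists (lift ord0 i); rewrite !(tnth_nth y).
Qed.

Lemma In_nth (T : Type) (x0 : T) s j : j < size s -> List.In (nth x0 s j) s.
Proof. by elim: s j => [|x s IHs] [|j] //= lt_j; [left | right; apply: IHs]. Qed.

Lemma nth_map_eq (T1 T2 U : Type) (f : T1 -> U) (g : T2 -> U) s1 s2 x1 x2 j :
  map f s1 = map g s2 -> j < size s1 -> f (nth x1 s1 j) = g (nth x2 s2 j).
Proof.
move=> fg lt_j; have lt_j2 : j < size s2 by rewrite -(size_map g) -fg size_map.
by rewrite -(nth_map x1 (f x1)) // fg (nth_map x2).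
Qed.

Lemma reshape_map (T U : Type) (f : T -> U) sh s :
  reshape sh (map f s) = map (map f) (reshape sh s).
Proof. by elim: sh s => [|n sh IHsh] s //=; rewrite -map_take -map_drop IHsh. Qed.

Lemma nth_map_nil (T U : Type) (f : T -> U) (ss : seq (seq T)) j :
  nth [::] (map (map f) ss) j = map f (nth [::] ss j).
Proof.
case: (ltnP j (size ss)) => [lt_j|le_j]; first by rewrite (nth_map [::]).
by rewrite !nth_default ?size_map.
Qed.

Lemma shape_map (T U : Type) (f : T -> U) (ss : seq (seq T)) :
  shape (map (map f) ss) = shape ss.
Proof. by rewrite /shape -map_comp; apply: eq_map => s /=; rewrite size_map. Qed.

Lemma take1_drop (T : Type) (x0 : T) s i :
  i < size s -> take 1 (drop i s) = [:: nth x0 s i].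
Proof. by move=> lt_i; rewrite (drop_nth x0 lt_i) /= take0. Qed.

Lemma map_enum_tnth (T U V : Type) k (cs : k.-tuple T) (h : T -> U) (f : U -> V) qf :
  (forall j, f (h (tnth cs j)) = qf j) -> map qf (enum 'I_k) = map f (map h cs).
Proof. by move=> fE; rewrite -[in RHS](map_tnth_enum cs) -!map_comp; apply: eq_map => j /=. Qed.

Lemma map_enum_nth (T U : Type) k (F : 'I_k -> U) (G : T -> U) (xs : seq T) :
  size xs = k -> (forall (j : 'I_k) x0, F j = G (nth x0 xs j)) -> map F (enum 'I_k) = map G xs.
Proof.
case: xs => [|x0 xs] sz FG; subst k; first by apply: size0nil; rewrite size_map size_enum_ord.
rewrite (eq_map (FG^~ x0)) -[in RHS](mkseq_nth x0 (x0 :: xs)) /mkseq -val_enum_ord.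
by rewrite -!map_comp.
Qed.

Lemma ord0_empty (i : 'I_0) : False. Proof. by case: i. Qed.

Section Valuations.
Variables (T U : Type) (ty : T -> U).

Definition vars (ts : seq U) : seq 'I_(size ts) := enum 'I_(size ts).

(* The variables of a rule are laid out as consecutive blocks, one for each argument
   tuple of type [nth [::] sh j]; [part sh j] lists the variables of block j. *)
Definition part (sh : seq (seq U)) (j : nat) : seq 'I_(size (flatten sh)) :=
  nth [::] (reshape (shape sh) (vars (flatten sh))) j.

Definition typed ts (v : 'I_(size ts) -> T) := forall x, ty (v x) = tnth (in_tuple ts) x.

Definition fits sh (v : 'I_(size (flatten sh)) -> T) (ws : seq (seq T)) :=
  map (map ty) ws = sh /\ map v (vars (flatten sh)) = flatten ws.

Lemma fits_part sh v ws j : fits v ws -> map v (part sh j) = nth [::] ws j.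
Proof.
case=> tyws vE; rewrite /part -nth_map_nil -reshape_map vE.
by rewrite -{1}tyws shape_map flattenK.
Qed.

Lemma typed_fits sh (v : 'I_(size (flatten sh)) -> T) : typed v -> exists ws, fits v ws.
Proof.
move=> tv; exists (reshape (shape sh) (map v (vars (flatten sh)))).
have tyvE : map ty (map v (vars (flatten sh))) = flatten sh.
  by rewrite -map_comp (eq_map tv) map_tnth_enum.
split; first by rewrite -reshape_map tyvE flattenK.
by rewrite reshapeKr // size_map /vars size_enum_ord size_flatten.
Qed.

Lemma typed_valuation ts vals :
  map ty vals = ts -> exists2 v : 'I_(size ts) -> T, typed v & map v (vars ts) = vals.
Proof.
move=> <-; case: vals => [|x0 vals].
  exists (fun i => False_rect T (ord0_empty i)) => [[]//|].
  by apply: size0nil; rewrite size_map size_enum_ord.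
exists (fun i => nth x0 (x0 :: vals) i) => [i|].
  by rewrite (tnth_nth (ty x0)) (nth_map x0) // -(size_map ty).
rewrite /vars -[RHS](mkseq_nth x0) /mkseq -val_enum_ord -map_comp.
by rewrite size_map.
Qed.

Lemma parts_fit sh ws :
  map (map ty) ws = sh ->
  exists2 v : 'I_(size (flatten sh)) -> T, typed v & fits v ws.
Proof.
move=> tyws; have [|v tv vE] := typed_valuation (ts := flatten sh) (vals := flatten ws).
  by rewrite -tyws -map_flatten.
by exists v.
Qed.

End Valuations.
Arguments part : simpl never.

Lemma map_tnth_part (U : Type) (sh : seq (seq U)) j :
  map (tnth (in_tuple (flatten sh))) (part sh j) = nth [::] sh j.
Proof.
apply: (@fits_part _ _ id); split; first by rewrite (eq_map (@map_id U)) map_id.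
exact: map_tnth_enum.
Qed.

Section Reduction.
Variables (P S : signature) (g : gadget P S).

Local Notation piece_id := (sty P + ssym P)%type.

Definition copy_ar (s : piece_id) : seq (sty P) :=
  match s with inl t => [:: t] | inr R => sar R end.

Definition piece (s : piece_id) : structure S :=
  match s with inl t => gD g t | inr R => gR g R end.

Definition copy_atoms (X : Type) (s : piece_id) (args : seq X) : seq (ssym P * seq X) :=
  if s is inr R then [:: (R, args)] else [::].

Variable elems : forall s, seq (piece s).
Hypothesis elems_cover : forall s (x : piece s), List.In x (elems s).

(* A point is a piece together with the index of one of its elements; points are the
   types of the intermediate signature. *)
Local Notation point := {s : piece_id & 'I_(size (elems s))}.

Definition pt_el (m : point) : piece (tag m) := tnth (in_tuple (elems (tag m))) (tagged m).

(* [elems s] may repeat elements, so the index picked here need not be the only one;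
   decoding never relies on it being canonical. *)
Definition pt_index s (x : piece s) : 'I_(size (elems s)) :=
  proj1_sig (constructive_indefinite_description _ (In_tnth (elems_cover x))).

Definition pt_of s (x : piece s) : point := Tagged (fun s => 'I_(size (elems s))) (pt_index x).

Lemma pt_ofK s (x : piece s) : pt_el (pt_of x) = x.
Proof. by rewrite /pt_el /pt_of /pt_index /=; case: constructive_indefinite_description. Qed.

Definition point_ar (m : point) : seq (sty P) := copy_ar (tag m).
Definition ptype (m : point) : sty S := tyof (piece (tag m)) (pt_el m).

Local Notation msym := {Q : ssym S & {w : (size (sar Q)).-tuple point | map ptype w == sar Q}}.

Definition msym_ar (r : msym) : (size (sar (tag r))).-tuple point := sval (tagged r).

Definition mid : signature := @Signature point msym (fun r => msym_ar r).

Local Notation step_idx :=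
  {R : ssym P & {i : 'I_(size (sar R)) & 'I_(size (elems (inl (ar_at R i))))}}.
Local Notation out_idx :=
  {r : msym & {s : piece_id & (size (sar (tag r))).-tuple 'I_(size (elems s))}}.

Definition step_src (x : step_idx) : point :=
  Tagged (fun s => 'I_(size (elems s))) (tagged (tagged x)).
Definition step_img (x : step_idx) : point :=
  @pt_of (inr (tag x)) (gp (pt_el (step_src x))).

Inductive idb_sym := Valid of point | Equiv of point & point | Out of msym.

Definition idb_sym_to_sum (I : idb_sym) :=
  match I with Valid m => inl (inl m) | Equiv m1 m2 => inl (inr (m1, m2)) | Out r => inr r end.
Definition idb_sym_of_sum c :=
  match c with inl (inl m) => Valid m | inl (inr (m1, m2)) => Equiv m1 m2 | inr r => Out r end.
Lemma idb_sym_to_sumK : cancel idb_sym_to_sum idb_sym_of_sum. Proof. by case. Qed.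
HB.instance Definition _ := Finite.copy idb_sym (can_type idb_sym_to_sumK).

Definition idb_ar (I : idb_sym) : seq (sty P) :=
  match I with
  | Valid m => point_ar m
  | Equiv m1 m2 => point_ar m1 ++ point_ar m2
  | Out r => flatten (map point_ar (msym_ar r))
  end.

Definition mkrule (sh : seq (seq (sty P))) (h : idb_sym) (ha : seq 'I_(size (flatten sh)))
    edb idb : rule P idb_sym :=
  @Rule P idb_sym (size (flatten sh)) (tnth (in_tuple (flatten sh))) h ha edb idb [::].

Definition valid_rule (m : point) :=
  let sh := [:: point_ar m] in
  mkrule (Valid m) (part sh 0) (copy_atoms (tag m) (part sh 0)) [::].

Definition refl_rule (m : point) :=
  let sh := [:: point_ar m] in
  mkrule (Equiv m m) (part sh 0 ++ part sh 0) [::] [:: (Valid m, part sh 0)].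

(* The identification of (a; p_{R,i}(d)) with (a_i; d), applied at the front of an
   Equiv fact in either direction. *)
Definition step_rule (fwd : bool) (x : step_idx) (m : point) :=
  let sh := [:: sar (tag x); point_ar m] in
  let img := (Equiv (step_img x) m, part sh 0 ++ part sh 1) in
  let pre := (Equiv (step_src x) m, take 1 (drop (tag (tagged x)) (part sh 0)) ++ part sh 1) in
  let hd := if fwd then img else pre in
  let bd := if fwd then pre else img in
  mkrule hd.1 hd.2 [:: (tag x, part sh 0)] [:: bd].

Definition out_rule_of (r : msym) s (cs : (size (sar (tag r))).-tuple 'I_(size (elems s))) :=
  let sh := copy_ar s :: map point_ar (msym_ar r) in
  let body := [seq (Equiv (Tagged _ (tnth cs j)) (tnth (msym_ar r) j), part sh 0 ++ part sh j.+1)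
              | j <- enum 'I_(size (sar (tag r)))] in
  mkrule (Out r) (drop (size (copy_ar s)) (vars (flatten sh))) (copy_atoms s (part sh 0)) body.

(* The relations of the pieces are arbitrary propositions, hence the classical test. *)
Definition out_rule (x : out_idx) : option (rule P idb_sym) :=
  let: existT r (existT s cs) := x in
  if excluded_middle_informative (rel (piece s) (tag r) [seq pt_el (Tagged _ c) | c <- cs])
  then Some (out_rule_of cs) else None.

Inductive rule_name :=
| ValidRule of point | ReflRule of point | StepRule of bool & step_idx & point | OutRule of out_idx.

Definition rule_name_to_sum n :=
  match n with
  | ValidRule m => inl (inl m) | ReflRule m => inl (inr m)
  | StepRule b x m => inr (inl (b, x, m)) | OutRule x => inr (inr x)
  end.
Definition rule_name_of_sum c :=
  match c with
  | inl (inl m) => ValidRule m | inl (inr m) => ReflRule m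
  | inr (inl (b, x, m)) => StepRule b x m | inr (inr x) => OutRule x
  end.
Lemma rule_name_to_sumK : cancel rule_name_to_sum rule_name_of_sum. Proof. by case. Qed.
HB.instance Definition _ := Finite.copy rule_name (can_type rule_name_to_sumK).

Definition rule_of (n : rule_name) : option (rule P idb_sym) :=
  match n with
  | ValidRule m => Some (valid_rule m)
  | ReflRule m => Some (refl_rule m)
  | StepRule b x m => Some (step_rule b x m)
  | OutRule x => out_rule x
  end.

Definition dl_rules : seq (rule P idb_sym) := pmap rule_of (enum {: rule_name}).

Definition dl_program (o : idb_sym) : program P := @Program P idb_sym idb_ar dl_rules o.

Definition reduction : dlu P S :=
  @DLU P S mid (@DLInterp P mid (fun m => dl_program (Valid m)) (fun r => dl_program (Out r)))
    (@UGadget mid S ptype (fun r => tag r)).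

Lemma In_dl_rules n r : rule_of n = Some r -> List.In r dl_rules.
Proof. by move=> Er; apply/In_pmap; exists n; first exact: In_enum. Qed.

Section WellFormed.

Local Notation var_ty sh := (tnth (in_tuple (flatten sh))).

Lemma mkrule_wf sh h (ha : seq 'I_(size (flatten sh))) edb idb :
  map (var_ty sh) ha = idb_ar h ->
  (forall a, List.In a edb -> map (var_ty sh) a.2 = sar a.1) ->
  (forall a, List.In a idb -> map (var_ty sh) a.2 = idb_ar a.1) ->
  wf_rule idb_ar (mkrule h ha edb idb).
Proof. by move=> wf_h wf_edb wf_idb; do !split=> // -[]. Qed.

Lemma copy_atoms_wf (X : Type) (f : X -> sty P) s args :
  map f args = copy_ar s -> forall a, List.In a (copy_atoms s args) -> map f a.2 = sar a.1.
Proof. by case: s => //= R Hargs a [<-|]. Qed.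

Lemma take1_drop_ar_at (R : ssym P) (i : 'I_(size (sar R))) :
  take 1 (drop i (sar R)) = [:: ar_at R i].
Proof. by rewrite (take1_drop (ar_at R i)) // {2}/ar_at (tnth_nth (ar_at R i)). Qed.

Lemma valid_rule_wf m : wf_rule idb_ar (valid_rule m).
Proof.
apply: mkrule_wf => [||? []]; first exact: map_tnth_part.
by apply: copy_atoms_wf; apply: map_tnth_part.
Qed.

Lemma refl_rule_wf m : wf_rule idb_ar (refl_rule m).
Proof.
apply: mkrule_wf => [|? []|? [<-|[]]] //; last exact: map_tnth_part.
by rewrite map_cat map_tnth_part.
Qed.

Lemma step_rule_wf fwd x m : wf_rule idb_ar (step_rule fwd x m).
Proof.
have map_pre : map (var_ty [:: sar (tag x); point_ar m])
    (take 1 (drop (tag (tagged x)) (part [:: sar (tag x); point_ar m] 0))) =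
  [:: ar_at (tag x) (tag (tagged x))].
  by rewrite map_take map_drop map_tnth_part take1_drop_ar_at.
by case: fwd; apply: mkrule_wf => [|? [<-|[]]|? [<-|[]]];
  rewrite ?map_cat ?map_pre ?map_tnth_part.
Qed.

Lemma out_rule_wf x r : out_rule x = Some r -> wf_rule idb_ar r.
Proof.
case: x => rr [s cs] /=; case: excluded_middle_informative => // _ [<-].
apply: mkrule_wf => [||? /In_map[j [<- _]]].
- by rewrite map_drop /vars map_tnth_enum /= drop_size_cat.
- by apply: copy_atoms_wf; rewrite map_tnth_part.
- rewrite map_cat !map_tnth_part /= (nth_map (tnth (msym_ar rr) j)) ?size_tuple //.
  by rewrite -tnth_nth.
Qed.

Lemma rule_of_wf n r : rule_of n = Some r -> wf_rule idb_ar r.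
Proof.
case: n => [m|m|fwd x m|x] /=; last exact: out_rule_wf.
all: move=> [<-]; by [apply: valid_rule_wf | apply: refl_rule_wf | apply: step_rule_wf].
Qed.

Lemma reduction_wf : wf_dlu reduction.
Proof.
have wf_prog o : wf_program (dl_program o).
  by move=> r /In_pmap[n _]; apply: rule_of_wf.
split; first by split; [move=> m | split=> [r|//]]; apply: wf_prog.
by move=> r /=; rewrite (eqP (svalP (tagged r))).
Qed.

End WellFormed.

Section Semantics.

Hypothesis piece_wt : forall s, wt_structure (piece s).
Hypothesis gp_tyof : forall R i (d : gD g (ar_at R i)),
  tyof (gR g R) (gp d) = tyof (gD g (ar_at R i)) d.

Variable A : structure P.
Hypothesis A_wt : wt_structure A.

Local Notation gpre := (gpre g A).
Local Notation gvalid := (@gvalid P S g A).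
Local Notation geqv := (@geqv P S g A).
Local Notation gident := (@gident P S g A).
Local Notation gcls := (@gcls P S g A).
Local Notation pty := (@pty P S g A).

Definition copy_guard (s : piece_id) (w : seq A) : Prop := if s is inr R then rel A R w else True.

Lemma copy_atoms_guard (X : Type) s (args : seq X) (v : X -> A) :
  (forall a, List.In a (copy_atoms s args) -> rel A a.1 (map v a.2)) <-> copy_guard s (map v args).
Proof.
case: s => [t|R] /=; first by split=> // _ a [].
by split=> [Hr|Hr a [<-|[]]] //; apply: (Hr (R, args)); left.
Qed.

Definition point_of (p : gpre) : point :=
  match p with @PD _ _ _ _ t _ d => @pt_of (inl t) d | @PR _ _ _ _ R _ e => @pt_of (inr R) e end.

Definition tuple_of (p : gpre) : seq A :=
  match p with @PD _ _ _ _ _ a _ => [:: a] | @PR _ _ _ _ _ a _ => a end.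

Definition decode (m : point) (w : seq A) : option gpre :=
  let: existT s c := m in
  match s return 'I_(size (elems s)) -> option gpre with
  | inl t => fun c => if w is [:: a] then Some (@PD _ _ g A t a (pt_el (Tagged _ c))) else None
  | inr R => fun c => Some (@PR _ _ g A R w (pt_el (Tagged _ c)))
  end c.

Definition denotes (m : point) (w : seq A) (p : gpre) := decode m w = Some p /\ gvalid p.

Lemma denotes_fun m w p q : denotes m w p -> denotes m w q -> p = q.
Proof. by move=> [dp _] [dq _]; move: dq; rewrite dp => -[]. Qed.

Lemma denotes_typed m w p : denotes m w p -> map (tyof A) w = point_ar m.
Proof.
case: m => [[t|R] c] [/= dp vp]; last by case: dp vp => <- /A_wt.
by case: w dp => [|a [|]] //= [pE]; rewrite -pE /= in vp; rewrite vp.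
Qed.

Lemma denotes_pty m w p : denotes m w p -> pty p = ptype m.
Proof.
case: m => [[t|R] c] [/= dp _]; last by case: dp => <-.
by case: w dp => [|a [|]] //= [<-].
Qed.

Lemma denotes_valid m w :
  map (tyof A) w = point_ar m -> copy_guard (tag m) w -> exists p, denotes m w p.
Proof.
case: m => [[t|R] c] /=; last by move=> _ Hr; eexists.
by case: w => [|a [|]] // [ta] _; eexists; split.
Qed.

Lemma tuple_of_typed p : gvalid p -> map (tyof A) (tuple_of p) = point_ar (point_of p).
Proof. by case: p => [t a d|R a e] /= => [->|/A_wt]. Qed.

Lemma tuple_of_copy_guard p : gvalid p -> copy_guard (tag (point_of p)) (tuple_of p).
Proof. by case: p. Qed.

Lemma ptype_point_of p : ptype (point_of p) = pty p.
Proof. by case: p => [t a d|R a e]; rewrite /ptype /= pt_ofK. Qed.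

Lemma gident_valid p q : gident p q -> gvalid p /\ gvalid q.
Proof.
case=> R [a [i [e [x0 [Hr [-> ->]]]]]]; split=> //=.
have tya := A_wt Hr; have lt_i : i < size a by rewrite -(size_map (tyof A)) tya.
by rewrite -(nth_map x0 (tyof A x0)) // tya /ar_at (tnth_nth (tyof A x0)).
Qed.

Lemma geqv_pty p q : geqv p q -> pty p = pty q.
Proof.
elim=> [{}p {}q [R [a [i [e [x0 [_ [-> ->]]]]]]]|//|_ _ _ ->|_ _ _ _ -> _ ->] //.
exact: gp_tyof.
Qed.

Lemma gcls_eq p q : gcls p = gcls q <-> geqv p q.
Proof.
split=> [[_ ->]|pq]; first exact: rst_refl.
rewrite /gcls (geqv_pty pq); congr pair.
apply: functional_extensionality => r; apply: propositional_extensionality.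
by split; apply: rst_trans; [apply: rst_sym|].
Qed.

Definition sem (I : idb_sym) (w : seq A) : Prop :=
  match I with
  | Valid m => exists p, denotes m w p
  | Equiv m1 m2 => exists p1 p2, denotes m1 (take (size (point_ar m1)) w) p1 /\
      denotes m2 (drop (size (point_ar m1)) w) p2 /\ geqv p1 p2
  | Out r => exists qf pf : 'I_(size (sar (tag r))) -> gpre,
      gcopy_rel (tag r) (map qf (enum 'I_(size (sar (tag r))))) /\
      forall j, geqv (qf j) (pf j) /\
        denotes (tnth (msym_ar r) j)
          (nth [::] (reshape (shape (map point_ar (msym_ar r))) w) j) (pf j)
  end.

Arguments sem : simpl never.

Lemma sem_equivP m1 m2 w1 w2 : size w1 = size (point_ar m1) ->
  sem (Equiv m1 m2) (w1 ++ w2) <-> exists p1 p2, denotes m1 w1 p1 /\ denotes m2 w2 p2 /\ geqv p1 p2.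
Proof. by move=> sz; rewrite /sem -sz take_size_cat // drop_size_cat. Qed.

Lemma step_ident x (a : seq A) : rel A (tag x) a ->
  exists p q, denotes (step_img x) a p /\
    denotes (step_src x) (take 1 (drop (tag (tagged x)) a)) q /\ gident p q.
Proof.
move=> Ha; have tya := A_wt Ha.
have lt_i : tag (tagged x) < size a by rewrite -(size_map (tyof A)) tya.
have b0 : A by move: lt_i; case: (a) => [|b] //.
have pq : gident (@PR _ _ g A (tag x) a (gp (pt_el (step_src x))))
                 (@PD _ _ g A _ (nth b0 a (tag (tagged x))) (pt_el (step_src x))).
  by exists (tag x), a, (tag (tagged x)), (pt_el (step_src x)), b0.
have [vp vq] := gident_valid pq.
exists (@PR _ _ g A (tag x) a (gp (pt_el (step_src x)))),
       (@PD _ _ g A _ (nth b0 a (tag (tagged x))) (pt_el (step_src x))).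
rewrite (take1_drop b0 lt_i); do !split=> //.
have -> : decode (step_img x) a = Some (@PR _ _ g A _ a (pt_el (step_img x))) by [].
by rewrite /step_img pt_ofK.
Qed.

Lemma copy_rel_decode s (w : seq A) Q k (cs : k.-tuple 'I_(size (elems s))) (qf : 'I_k -> gpre) :
  map (tyof A) w = copy_ar s -> copy_guard s w ->
  rel (piece s) Q [seq pt_el (Tagged _ c) | c <- cs] ->
  (forall j, decode (Tagged _ (tnth cs j)) w = Some (qf j)) ->
  gcopy_rel Q (map qf (enum 'I_k)).
Proof.
case: s cs => [t|R] cs /= tyw wrel Hrel dq.
- case: w tyw dq => [|a [|]] // [ta] dq; left.
  exists t, a, [seq pt_el (Tagged _ c) | c <- cs]; do !split=> //.
  by apply: map_enum_tnth => j; case: (dq j).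
- right; exists R, w, [seq pt_el (Tagged _ c) | c <- cs]; do !split=> //.
  by apply: map_enum_tnth => j; case: (dq j).
Qed.

Definition rule_sound (r : rule P idb_sym) : Prop :=
  forall v : 'I_(nv r) -> A, (forall x, tyof A (v x) = vty x) ->
  (forall a, List.In a (bedb r) -> rel A a.1 (map v a.2)) ->
  (forall a, List.In a (bidb r) -> sem a.1 (map v a.2)) ->
  sem (hsym r) (map v (hargs r)).

Lemma mkrule_sound sh h (ha : seq 'I_(size (flatten sh))) edb idb :
  (forall v ws, fits (tyof A) v ws ->
     (forall a, List.In a edb -> rel A a.1 (map v a.2)) ->
     (forall a, List.In a idb -> sem a.1 (map v a.2)) -> sem h (map v ha)) ->
  rule_sound (mkrule h ha edb idb).
Proof. by move=> Hsem v /typed_fits[ws fit]; apply: Hsem fit. Qed.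

Lemma valid_rule_sound m : rule_sound (valid_rule m).
Proof.
apply: mkrule_sound => v ws fit /copy_atoms_guard edb _.
have v0 := fits_part 0 fit; case: fit => tyws _.
case: ws tyws v0 => [|w [|]] //= [tyw] v0.
by rewrite v0 in edb *; apply: denotes_valid.
Qed.

Lemma refl_rule_sound m : rule_sound (refl_rule m).
Proof.
apply: mkrule_sound => v ws fit _ body.
have v0 := fits_part 0 fit; case: fit => tyws _.
case: ws tyws v0 => [|w [|]] //= [tyw] v0.
have [p dp] : sem (Valid m) w by rewrite -v0; apply: (body (Valid m, _)); left.
rewrite map_cat v0; apply/sem_equivP; first by rewrite -tyw size_map.
by exists p, p; do !split=> //; apply: rst_refl.
Qed.

Lemma step_rule_sound fwd x m : rule_sound (step_rule fwd x m).
Proof.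
apply: mkrule_sound => v ws fit edb body.
have [tyws _] := fit; case: ws tyws fit => [|a [|z [|]]] //= [tya tyz] fit.
have v0 : map v (part _ 0) = a := fits_part 0 fit.
have v1 : map v (part _ 1) = z := fits_part 1 fit.
have Ha : rel A (tag x) a by rewrite -v0; apply: (edb (tag x, _)); left.
have [p [q [dp [dq pq]]]] := step_ident Ha.
have sz_img : size a = size (point_ar (step_img x)) by rewrite -(size_map (tyof A)) tya.
have lt_i : tag (tagged x) < size a by rewrite -(size_map (tyof A)) tya.
have sz_src : size (take 1 (drop (tag (tagged x)) a)) = size (point_ar (step_src x)).
  by rewrite size_takel // size_drop subn_gt0.
have imgE : map v (part _ 0 ++ part _ 1) = a ++ z by rewrite map_cat v0 v1.
have preE : map v (take 1 (drop (tag (tagged x)) (part _ 0)) ++ part _ 1) =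
    take 1 (drop (tag (tagged x)) a) ++ z by rewrite map_cat map_take map_drop v0 v1.
move/(_ _ (or_introl erefl)): body.
case: fwd => /=; rewrite imgE preE.
- case/(sem_equivP _ _ sz_src) => q' [r [dq' [dr qr]]].
  apply/sem_equivP => //; exists p, r; do 2 split=> //.
  by rewrite -(denotes_fun dq dq') in qr; apply: rst_trans qr; apply: rst_step.
- case/(sem_equivP _ _ sz_img) => p' [r [dp' [dr pr]]].
  apply/sem_equivP => //; exists q, r; do 2 split=> //.
  rewrite -(denotes_fun dp dp') in pr; apply: rst_trans pr.
  by apply: rst_sym; apply: rst_step.
Qed.

Lemma out_rule_sound x r : out_rule x = Some r -> rule_sound r.
Proof.
case: x => rr [s cs] /=; case: excluded_middle_informative => // Hrel [<-].
apply: mkrule_sound => v ws fit /copy_atoms_guard edb body.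
have vj j := fits_part j fit; case: fit => tyws vE.
case: ws tyws vE vj => [|w0 ws] //= [tyw0 tyws] vE vj.
rewrite (vj 0) in edb.
have -> : map v (drop (size (copy_ar s)) (vars (flatten (copy_ar s :: map point_ar (msym_ar rr)))))
    = flatten ws by rewrite map_drop vE -tyw0 size_map drop_size_cat.
rewrite /sem -tyws shape_map flattenK.
have sz_w0 j : size w0 = size (point_ar (Tagged _ (tnth cs j))).
  by rewrite -(size_map (tyof A)) tyw0.
have Hj j : exists qp : gpre * gpre, denotes (Tagged _ (tnth cs j)) w0 qp.1 /\
    geqv qp.1 qp.2 /\ denotes (tnth (msym_ar rr) j) (nth [::] ws j) qp.2.
  have := body _ (proj2 (In_map _ _ _) (ex_intro _ j (conj erefl (In_enum j)))).
  rewrite /= map_cat (vj 0) (vj j.+1) /=.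
  by case/(sem_equivP _ _ (sz_w0 j)) => q [p [dq [dp qp]]]; exists (q, p).
have [qpf Hqpf] := choice _ Hj.
exists (fun j => (qpf j).1), (fun j => (qpf j).2); split.
  by apply: copy_rel_decode tyw0 edb Hrel _ => j; case: (Hqpf j) => -[].
by move=> j; case: (Hqpf j).
Qed.

Lemma rule_of_sound n r : rule_of n = Some r -> rule_sound r.
Proof.
case: n => [m|m|fwd x m|x] /=; last exact: out_rule_sound.
all: move=> [<-]; by [apply: valid_rule_sound | apply: refl_rule_sound | apply: step_rule_sound].
Qed.

Lemma derives_sound o I w : derives (dl_program o) A I w -> sem I w.
Proof. by elim=> r v /In_pmap[n _ /rule_of_sound] r_sound tv edb _ IH _; apply: r_sound. Qed.

Lemma rule_of_beq n r : rule_of n = Some r -> beq r = [::].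
Proof.
case: n => [m|m|fwd x m|[rr [s cs]]] /=; try by move=> [<-].
by case: excluded_middle_informative => // _ [<-].
Qed.

Lemma derives_rule o n r (v : 'I_(nv r) -> A) :
  rule_of n = Some r -> (forall x, tyof A (v x) = vty x) ->
  (forall a, List.In a (bedb r) -> rel A a.1 (map v a.2)) ->
  (forall a, List.In a (bidb r) -> derives (dl_program o) A a.1 (map v a.2)) ->
  derives (dl_program o) A (hsym r) (map v (hargs r)).
Proof.
move=> rn tv edb idb; apply: Der => //; first exact: In_dl_rules rn.
by rewrite (rule_of_beq rn).
Qed.

Lemma derive_valid o p : gvalid p -> derives (dl_program o) A (Valid (point_of p)) (tuple_of p).
Proof.
move=> vp; have [|v tv fit] := parts_fit (ty := tyof A) (sh := [:: point_ar (point_of p)])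
  (ws := [:: tuple_of p]).
  by rewrite /= tuple_of_typed.
have v0 : map v (part _ 0) = tuple_of p := fits_part 0 fit.
have := derives_rule (o := o) (n := ValidRule (point_of p)) erefl tv.
rewrite /= v0; apply=> [|_ []].
by apply/copy_atoms_guard; rewrite v0; apply: tuple_of_copy_guard.
Qed.

Lemma derive_refl o p : gvalid p ->
  derives (dl_program o) A (Equiv (point_of p) (point_of p)) (tuple_of p ++ tuple_of p).
Proof.
move=> vp; have [|v tv fit] := parts_fit (ty := tyof A) (sh := [:: point_ar (point_of p)])
  (ws := [:: tuple_of p]).
  by rewrite /= tuple_of_typed.
have v0 : map v (part _ 0) = tuple_of p := fits_part 0 fit.
have := derives_rule (o := o) (n := ReflRule (point_of p)) erefl tv.
rewrite /= map_cat v0; apply=> [_ []|_ [<-|[]]] //.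
by rewrite /= v0; apply: derive_valid.
Qed.

Lemma derive_ident o p q z : gident p q -> gvalid z ->
  derives (dl_program o) A (Equiv (point_of q) (point_of z)) (tuple_of q ++ tuple_of z) <->
  derives (dl_program o) A (Equiv (point_of p) (point_of z)) (tuple_of p ++ tuple_of z).
Proof.
case=> R [a [i [e [x0 [Ha [-> ->]]]]]] vz.
pose x : step_idx := existT _ R (existT _ i (@pt_index (inl (ar_at R i)) e)).
have img : step_img x = @pt_of (inr R) (gp e) by rewrite /step_img /= pt_ofK.
have tya := A_wt Ha; have lt_i : i < size a by rewrite -(size_map (tyof A)) tya.
have [|v tv fit] := parts_fit (ty := tyof A) (sh := [:: sar R; point_ar (point_of z)])
  (ws := [:: a; tuple_of z]).
  by rewrite /= tya tuple_of_typed.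
have v0 : map v (part _ 0) = a := fits_part 0 fit.
have v1 : map v (part _ 1) = tuple_of z := fits_part 1 fit.
have edb : forall b, List.In b [:: (R, part [:: sar R; point_ar (point_of z)] 0)] ->
    rel A b.1 (map v b.2) by move=> _ [<-|[]]; rewrite /= v0.
have imgE : map v (part _ 0 ++ part _ 1) = a ++ tuple_of z by rewrite map_cat v0 v1.
have preE : map v (take 1 (drop i (part _ 0)) ++ part _ 1) = [:: nth x0 a i] ++ tuple_of z.
  by rewrite map_cat map_take map_drop v0 v1 (take1_drop x0).
split=> D.
- have := derives_rule (o := o) (n := StepRule true x (point_of z)) erefl tv edb.
  by rewrite /= imgE img; apply=> _ [<-|[]]; rewrite /= preE.
- have := derives_rule (o := o) (n := StepRule false x (point_of z)) erefl tv edb.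
  by rewrite /= preE; apply=> _ [<-|[]]; rewrite /= imgE img.
Qed.

Lemma derive_equiv o p q : geqv p q -> gvalid p ->
  derives (dl_program o) A (Equiv (point_of p) (point_of q)) (tuple_of p ++ tuple_of q).
Proof.
move=> /(clos_rst_rst1n _ _ _ _) pq vp.
suff [] : gvalid q /\
  derives (dl_program o) A (Equiv (point_of p) (point_of q)) (tuple_of p ++ tuple_of q) by [].
elim: pq vp => {p q} [p|p q z pq _ IH] vp; first by split=> //; apply: derive_refl.
have vq : gvalid q by case: pq => /gident_valid[].
have [vz Dq] := IH vq; split=> //.
by case: pq => [pq|qp]; [apply/(derive_ident _ pq vz) | apply/(derive_ident _ qp vz)].
Qed.

Lemma copy_rel_valid Q ps : gcopy_rel Q ps -> forall p, List.In p ps -> gvalid p.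
Proof. by case=> [[t [a [ds [ta [_ ->]]]]]|[R [a [es [Ha [_ ->]]]]]] p /In_map[d [<- _]]. Qed.

Lemma copy_rel_pty Q ps : gcopy_rel Q ps -> map pty ps = sar Q.
Proof.
case=> [[t [a [ds [_ [Hr ->]]]]]|[R [a [es [_ [Hr ->]]]]]]; rewrite -map_comp.
- exact: (@piece_wt (inl t) _ _ Hr).
- exact: (@piece_wt (inr R) _ _ Hr).
Qed.

Lemma copy_rel_inv Q ps : gcopy_rel Q ps ->
  exists s w (xs : seq (piece s)), map (tyof A) w = copy_ar s /\ copy_guard s w /\
    rel (piece s) Q xs /\ map point_of ps = map (@pt_of s) xs /\
    forall p, List.In p ps -> tuple_of p = w.
Proof.
case=> [[t [a [ds [ta [Hr ->]]]]]|[R [a [es [Ha [Hr ->]]]]]].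
- exists (inl t), [:: a], ds; rewrite /= ta -map_comp; do !split=> //.
  by move=> p /In_map[d [<- _]].
- exists (inr R), a, es; rewrite -map_comp; do !split=> //; first exact: A_wt.
  by move=> p /In_map[d [<- _]].
Qed.

Lemma copy_msym Q ps qs : gcopy_rel Q ps -> map gcls ps = map gcls qs ->
  exists r : msym, tag r = Q /\ tval (msym_ar r) = map point_of qs.
Proof.
move=> Hc Hcls.
have sz_ar : size (map point_of qs) == size (sar Q).
  by rewrite size_map -(size_map gcls) -Hcls size_map -(copy_rel_pty Hc) size_map.
have ty_ar : map ptype (Tuple sz_ar) == sar Q.
  apply/eqP; rewrite /= -map_comp (eq_map ptype_point_of) -(copy_rel_pty Hc).
  by rewrite [map pty qs](map_comp fst gcls) -Hcls -map_comp.
by exists (existT _ Q (exist _ (Tuple sz_ar) ty_ar)).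
Qed.

Lemma derive_out Q ps qs : gcopy_rel Q ps -> map gcls ps = map gcls qs ->
  (forall q, List.In q qs -> gvalid q) ->
  exists r : msym, tag r = Q /\ tval (msym_ar r) = map point_of qs /\
    forall o, derives (dl_program o) A (Out r) (flatten (map tuple_of qs)).
Proof.
move=> Hc Hcls vqs; have [r [rQ ar_r]] := copy_msym Hc Hcls.
exists r; split=> //; split=> // o.
have [s [w [xs [tyw [wrel [Hrel [pts tups]]]]]]] := copy_rel_inv Hc.
have sz_ps : size ps = size (sar (tag r)) by rewrite rQ -(copy_rel_pty Hc) size_map.
have sz_qs : size ps = size qs by rewrite -(size_map gcls) Hcls size_map.
have sz_xs : size ps = size xs by rewrite -(size_map point_of) pts size_map.
have sz_cs : size (map (@pt_index s) xs) == size (sar (tag r)) by rewrite size_map -sz_xs sz_ps.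
pose cs : (size (sar (tag r))).-tuple 'I_(size (elems s)) := Tuple sz_cs.
have guard : rel (piece s) (tag r) [seq pt_el (Tagged _ c) | c <- cs].
  by rewrite -map_comp (eq_map (@pt_ofK s)) map_id rQ.
have rx : rule_of (OutRule (existT _ r (existT _ s cs))) = Some (out_rule_of cs).
  by rewrite /=; case: excluded_middle_informative.
have [|v tv fit] := parts_fit (ty := tyof A) (sh := copy_ar s :: map point_ar (msym_ar r))
  (ws := w :: map tuple_of qs).
  rewrite /= tyw ar_r -!map_comp; congr (_ :: _).
  by apply: List.map_ext_in => q /vqs; apply: tuple_of_typed.
have vj j := fits_part j fit.
have := derives_rule (o := o) rx tv; rewrite /= map_drop (proj2 fit) /=.
have sz_w : size (copy_ar s) = size w by rewrite -tyw size_map.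
rewrite sz_w drop_size_cat //; apply; first by apply/copy_atoms_guard; rewrite (vj 0).
move=> _ /In_map[j [<- _]] /=; rewrite map_cat (vj 0) (vj j.+1) /=.
have lt_j : j < size ps by rewrite sz_ps.
pose p0 := tnth (in_tuple ps) (Ordinal lt_j).
have lt_xs : j < size xs by rewrite -sz_xs.
pose x0 := tnth (in_tuple xs) (Ordinal lt_xs).
have -> : Tagged _ (tnth cs j) = point_of (nth p0 ps j).
  by rewrite (nth_map_eq p0 x0 pts lt_j) (tnth_nth (pt_index x0)) (nth_map x0) // -sz_xs.
have -> : tnth (msym_ar r) j = point_of (nth p0 qs j).
  by rewrite (tnth_nth (point_of p0)) ar_r (nth_map p0) // -sz_qs.
rewrite (nth_map p0) -?sz_qs // -(tups _ (In_nth p0 lt_j)).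
apply: derive_equiv; last exact: copy_rel_valid Hc _ (In_nth _ lt_j).
exact/gcls_eq/(nth_map_eq _ _ Hcls lt_j).
Qed.

Local Notation GA := (gadget_apply g A).
Local Notation RA := (dlu_apply reduction A).

Definition class_rep (c : GA) : gpre :=
  proj1_sig (constructive_indefinite_description _ (proj2_sig c)).

Lemma class_repP c : gvalid (class_rep c) /\ gcls (class_rep c) = proj1_sig c.
Proof. by rewrite /class_rep; case: constructive_indefinite_description. Qed.

Definition to_reduction (c : GA) : RA :=
  exist _ (point_of (class_rep c), tuple_of (class_rep c)) (derive_valid _ (proj1 (class_repP c))).

Lemma to_reduction_hom : is_hom to_reduction.
Proof.
split=> [c|Q cs [ps [Hc Hm]]] /=; first by rewrite ptype_point_of; case: (class_repP c) => _ <-.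
have Hcls : map gcls ps = map gcls (map class_rep cs).
  by rewrite Hm -map_comp; apply: eq_map => c /=; case: (class_repP c).
have vqs q : List.In q (map class_rep cs) -> gvalid q.
  by case/In_map=> c [<- _]; case: (class_repP c).
have [r [rQ [cols D]]] := derive_out Hc Hcls vqs.
exists r; split=> //; split; first by rewrite /= cols -!map_comp.
by have := D (Out r); rewrite -!map_comp.
Qed.

Lemma reduction_denotes (x : RA) : exists p, denotes (sval x).1 (sval x).2 p.
Proof. exact: derives_sound (svalP x). Qed.

Definition of_reduction (x : RA) : gpre :=
  proj1_sig (constructive_indefinite_description _ (reduction_denotes x)).

Lemma of_reductionP x : denotes (sval x).1 (sval x).2 (of_reduction x).
Proof. by rewrite /of_reduction; case: constructive_indefinite_description. Qed.

Definition from_reduction (x : RA) : GA :=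
  exist _ (gcls (of_reduction x)) (ex_intro _ _ (conj (proj2 (of_reductionP x)) erefl)).

Lemma from_reduction_hom : is_hom from_reduction.
Proof.
split=> [x|Q xs [r [<- [cols D]]]] /=; first exact: denotes_pty (of_reductionP x).
have [qf [pf [Hc Hj]]] := derives_sound D.
have {}cols : map (fun x => (sval x).1) xs = msym_ar r := cols.
have shapeE : shape (map point_ar (msym_ar r)) = shape (map (fun x => (sval x).2) xs).
  rewrite -cols /shape -!map_comp; apply: eq_map => x /=.
  by rewrite -(denotes_typed (of_reductionP x)) size_map.
have sz_xs : size xs = size (sar (tag r)).
  by rewrite -(size_map (fun x => (sval x).1)) cols size_tuple.
exists (map qf (enum 'I_(size (sar (tag r))))); split=> //.
rewrite -[LHS]map_comp -[RHS]map_comp; apply: map_enum_nth => // j x0 /=.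
have [qp dp] := Hj j; rewrite shapeE flattenK in dp.
have lt_j : j < size xs by rewrite sz_xs.
have <- : pf j = of_reduction (nth x0 xs j).
  apply: denotes_fun dp _; rewrite (nth_map x0) // (tnth_nth (sval x0).1) -cols (nth_map x0) //.
  exact: of_reductionP.
exact/gcls_eq.
Qed.

Lemma reduction_hom_equiv : hom_equiv GA RA.
Proof.
split; first by exists to_reduction; apply: to_reduction_hom.
by exists from_reduction; apply: from_reduction_hom.
Qed.

End Semantics.

End Reduction.

Unset Implicit Arguments.

Theorem mainTheorem4 (P S : signature) (g : gadget P S) :
  wf_gadget g ->
  exists psi : dlu P S,
    wf_dlu psi /\
    forall A : structure P, wt_structure A ->
      hom_equiv (gadget_apply g A) (dlu_apply psi A).
Proof.
case=> gD_wf [gR_wf gp_hom].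
have piece_wf s : wt_structure (piece g s) /\ finite_structure (piece g s).
  by case: s => [t|R]; [apply: gD_wf | apply: gR_wf].
pose elems s := proj1_sig (constructive_indefinite_description _ (proj2 (piece_wf s))).
have elems_cover s (x : piece g s) : List.In x (elems s).
  by rewrite /elems; case: constructive_indefinite_description.
exists (reduction elems_cover); split; first exact: reduction_wf.
move=> A A_wt; apply: reduction_hom_equiv => // [s|R i d]; first by case: (piece_wf s).
exact: (proj1 (gp_hom R i)).
Qed.
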